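(* Let $\mathcal{A}$ be an abelian category and let $K, Y$ be objects. Consider two short exact sequences $\xi_1\colon 0\to K_1\to X_1\xrightarrow{\alpha_1} Y\to 0$ and $\xi_2\colon 0\to K_2\to X_2\xrightarrow{\alpha_2} Y\to 0$, and the statements: (1) there is a morphism $v\colon X_1\to X_2$ with $\alpha_1=\alpha_2\circ v$; (2) there is a morphism $u\colon K_1\to K_2$ with $[\xi_2]=[u.\xi_1]$; (3) $\mathrm{Im}\, c(\xi_2,K)\subseteq \mathrm{Im}\, c(\xi_1,K)$. Then $(1)\Leftrightarrow(2)\Rightarrow(3)$; consequently, if $\alpha_1$ and $\alpha_2$ are right equivalent then $\mathrm{Im}\,c(\xi_1,K)=\mathrm{Im}\,c(\xi_2,K)$. If moreover $K_2\in\mathrm{add}\,K$, then $(3)\Rightarrow(2)$; consequently, if both $K_1,K_2\in\mathrm{add}\,K$, then $\alpha_1$ and $\alpha_2$ are right equivalent if and only if $\mathrm{Im}\,c(\xi_1,K)=\mathrm{Im}\,c(\xi_2,K)$.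
   Context: For an object $K$ of an abelian category $\mathcal{A}$, $\Gamma(K)=\mathrm{End}_{\mathcal{A}}(K)$; $\mathrm{Hom}_{\mathcal{A}}(Y,K)$ and $\mathrm{Ext}^1_{\mathcal{A}}(Y,K)$ are left $\Gamma(K)$-modules. For a short exact sequence $\xi$, $[\xi]$ denotes its class in $\mathrm{Ext}^1$. For $\xi\colon 0\to K'\to X\to Y\to 0$ and $u\colon K'\to Z$, $u.\xi$ denotes the pushout of $\xi$ along $u$. The connecting map $c(\xi,Z)\colon \mathrm{Hom}_{\mathcal{A}}(K',Z)\to\mathrm{Ext}^1_{\mathcal{A}}(Y,Z)$ sends $u$ to $[u.\xi]$; it is a $\Gamma(Z)$-module morphism. $\mathrm{add}\,K$ is the full subcategory of direct summands of finite direct sums of copies of $K$. Two morphisms $\alpha_1\colon X_1\to Y$, $\alpha_2\colon X_2\to Y$ are right equivalent if each factors through the other (i.e. $\alpha_1=\alpha_2\circ v$ and $\alpha_2=\alpha_1\circ v'$ for some $v,v'$). *)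

From mathcomp Require Import all_boot all_algebra.
Set Implicit Arguments. Unset Strict Implicit. Unset Printing Implicit Defensive.
Import GRing.Theory.
Local Open Scope ring_scope.

Record PreAddCat := {
  Ob :> Type;
  Mor : Ob -> Ob -> zmodType;
  mcomp : forall A B C : Ob, Mor B C -> Mor A B -> Mor A C;
  idm : forall A : Ob, Mor A A;
  compA : forall (A B C D : Ob) (h : Mor C D) (g : Mor B C) (f : Mor A B),
      mcomp h (mcomp g f) = mcomp (mcomp h g) f;
  comp1m : forall (A B : Ob) (f : Mor A B), mcomp (idm B) f = f;
  compm1 : forall (A B : Ob) (f : Mor A B), mcomp f (idm A) = f;
  compDl : forall (A B C : Ob) (g g' : Mor B C) (f : Mor A B),
      mcomp (g + g') f = mcomp g f + mcomp g' f;
  compDr : forall (A B C : Ob) (g : Mor B C) (f f' : Mor A B),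
      mcomp g (f + f') = mcomp g f + mcomp g f'
}.

Arguments mcomp {C A B C0} _ _ : rename.
Arguments idm {C} A : rename.

Section Abelian.
Variable C : PreAddCat.

Definition mono {A B : C} (f : Mor A B) : Prop :=
  forall (T : C) (g h : Mor T A), mcomp f g = mcomp f h -> g = h.
Definition epi {A B : C} (f : Mor A B) : Prop :=
  forall (T : C) (g h : Mor B T), mcomp g f = mcomp h f -> g = h.

Definition is_kernel {A B Kk : C} (f : Mor A B) (k : Mor Kk A) : Prop :=
  mcomp f k = 0 /\
  forall (T : C) (t : Mor T A), mcomp f t = 0 -> exists! t' : Mor T Kk, mcomp k t' = t.

Definition is_cokernel {A B Q : C} (f : Mor A B) (q : Mor B Q) : Prop :=
  mcomp q f = 0 /\
  forall (T : C) (t : Mor B T), mcomp t f = 0 -> exists! t' : Mor Q T, mcomp t' q = t.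

Definition is_biproduct {A B S : C} (i1 : Mor A S) (i2 : Mor B S)
    (p1 : Mor S A) (p2 : Mor S B) : Prop :=
  [/\ mcomp p1 i1 = idm A, mcomp p2 i2 = idm B, mcomp p1 i2 = 0, mcomp p2 i1 = 0
    & mcomp i1 p1 + mcomp i2 p2 = idm S].

Definition abelian : Prop :=
  [/\ (exists Z : C, idm Z = 0),
      (forall A B : C, exists (S : C) (i1 : Mor A S) (i2 : Mor B S)
          (p1 : Mor S A) (p2 : Mor S B), is_biproduct i1 i2 p1 p2),
      ((forall (A B : C) (f : Mor A B), exists (Kk : C) (k : Mor Kk A), is_kernel f k) /\
       (forall (A B : C) (f : Mor A B), exists (Q : C) (q : Mor B Q), is_cokernel f q))
    & ((forall (A B : C) (f : Mor A B), mono f -> exists (Z : C) (g : Mor B Z), is_kernel g f) /\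
       (forall (A B : C) (f : Mor A B), epi f -> exists (Z : C) (g : Mor Z A), is_cokernel g f))].

Definition is_pushout {W X Z P : C} (f : Mor W X) (u : Mor W Z)
    (a : Mor X P) (b : Mor Z P) : Prop :=
  mcomp a f = mcomp b u /\
  forall (T : C) (x : Mor X T) (z : Mor Z T), mcomp x f = mcomp z u ->
    exists! t : Mor P T, mcomp t a = x /\ mcomp t b = z.

(** A (candidate) extension  0 -> Kk --E_in--> E_ob --E_out--> Y -> 0 *)
Record ext (Y Kk : C) := mkExt {
  E_ob : C;
  E_in : Mor Kk E_ob;
  E_out : Mor E_ob Y
}.

Definition short_exact {Y Kk : C} (e : ext Y Kk) : Prop :=
  is_kernel (E_out e) (E_in e) /\ is_cokernel (E_in e) (E_out e).

(** Yoneda relation: a morphism of extensions which is the identity on both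
    ends; for short exact sequences this is the equivalence relation whose
    classes form Ext^1(Y, Kk).  [ext_eq e e'] reads [e] = [e'] in Ext^1. *)
Definition ext_eq {Y Kk : C} (e e' : ext Y Kk) : Prop :=
  exists h : Mor (E_ob e) (E_ob e'),
    mcomp h (E_in e) = E_in e' /\ mcomp (E_out e') h = E_out e.

Definition is_pushout_ext {Y K' Z : C} (e : ext Y K') (u : Mor K' Z)
    (p : ext Y Z) : Prop :=
  exists a : Mor (E_ob e) (E_ob p),
    [/\ is_pushout (E_in e) u a (E_in p),
        mcomp (E_out p) a = E_out e & mcomp (E_out p) (E_in p) = 0].

Definition ext_push_eq {Y K' Z : C} (eta : ext Y Z) (u : Mor K' Z)
    (e : ext Y K') : Prop :=
  exists p : ext Y Z, is_pushout_ext e u p /\ ext_eq p eta.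

(** Im c(e, Kk) ⊆ Ext^1(Y, Kk), as the set of short exact sequences whose
    class lies in the image (a union of Yoneda classes). *)
Definition c_image {Y K' : C} (e : ext Y K') (Kk : C) : ext Y Kk -> Prop :=
  fun eta => short_exact eta /\ exists u : Mor K' Kk, ext_push_eq eta u e.

Definition right_equiv {X1 X2 Y : C} (a1 : Mor X1 Y) (a2 : Mor X2 Y) : Prop :=
  (exists v : Mor X1 X2, a1 = mcomp a2 v) /\ (exists v' : Mor X2 X1, a2 = mcomp a1 v').

Definition is_power (Kk S : C) (n : nat) (i : 'I_n -> Mor Kk S) (p : 'I_n -> Mor S Kk) : Prop :=
  (forall j l : 'I_n, mcomp (p j) (i l) = if j == l then idm Kk else 0) /\
  \sum_(j < n) mcomp (i j) (p j) = idm S.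

Definition in_add (Kk M : C) : Prop :=
  exists (n : nat) (S : C) (i : 'I_n -> Mor Kk S) (p : 'I_n -> Mor S Kk),
    is_power i p /\
    exists (L : C) (s1 : Mor M S) (s2 : Mor L S) (r1 : Mor S M) (r2 : Mor S L),
      [/\ mcomp r1 s1 = idm M, mcomp r2 s2 = idm L, mcomp r1 s2 = 0, mcomp r2 s1 = 0
        & mcomp s1 r1 + mcomp s2 r2 = idm S].

End Abelian.

Arguments c_image {C Y K'} e Kk _.

From Pilot Require Import Defs.
From mathcomp Require Import all_boot all_algebra.
Set Implicit Arguments. Unset Strict Implicit. Unset Printing Implicit Defensive.
Import GRing.Theory.
Local Open Scope ring_scope.

(* (1) <=> (2): a map v over Y from xi1 to xi2 restricts to u : K1 -> K2,
   and the pushout u.xi1 maps to xi2 over Y and under K2, i.e. is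
   Yoneda-equivalent to it; conversely the pushout morphism is a map over Y.
   (1) => (3) follows by composing maps over Y.
   (3) => (1) for K2 in add K: let 0 -> K2 -j-> Q -pi1-> X1 -> 0 be the
   pullback of xi2 along alpha1.  For w : K2 -> K the class [w.xi2] lies in
   Im c(xi1, K), so alpha1 factors through w.xi2, which extends w along j.
   Extending the components of K2 -> K^n shows that j splits, so pi1 has a
   section s, and v := pi2 s. *)

Local Notation "g ∘ f" := (mcomp g f) (at level 40, left associativity).
Local Notation mcompA := Pilot.Defs.compA.

Section Extensions.
Variable C : PreAddCat.

Lemma comp0m (A B D : C) (f : Mor A B) : (0 : Mor B D) ∘ f = 0.
Proof.
have E := compDl (0 : Mor B D) 0 f; rewrite addr0 in E.
by apply: (@addrI _ (0 ∘ f)); rewrite -E addr0.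
Qed.

Lemma compm0 (A B D : C) (g : Mor B D) : g ∘ (0 : Mor A B) = 0.
Proof.
have E := compDr g (0 : Mor A B) 0; rewrite addr0 in E.
by apply: (@addrI _ (g ∘ 0)); rewrite -E addr0.
Qed.

Lemma compNl (A B D : C) (g : Mor B D) (f : Mor A B) : (- g) ∘ f = - (g ∘ f).
Proof. by apply/eqP; rewrite -addr_eq0 -compDl addNr comp0m. Qed.

Lemma compNr (A B D : C) (g : Mor B D) (f : Mor A B) : g ∘ (- f) = - (g ∘ f).
Proof. by apply/eqP; rewrite -addr_eq0 -compDr addNr compm0. Qed.

Lemma compBl (A B D : C) (g g' : Mor B D) (f : Mor A B) :
  (g - g') ∘ f = g ∘ f - g' ∘ f.
Proof. by rewrite compDl compNl. Qed.

Lemma compBr (A B D : C) (g : Mor B D) (f f' : Mor A B) :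
  g ∘ (f - f') = g ∘ f - g ∘ f'.
Proof. by rewrite compDr compNr. Qed.

Lemma comp_suml (A B D : C) (I : Type) (r : seq I) (P : pred I)
    (F : I -> Mor B D) (g : Mor A B) :
  (\sum_(i <- r | P i) F i) ∘ g = \sum_(i <- r | P i) F i ∘ g.
Proof. by apply: (big_morph (mcomp^~ g)) => [x y|]; [exact: compDl | exact: comp0m]. Qed.

Lemma mono_by0 (A B : C) (f : Mor A B) :
  (forall T (g : Mor T A), f ∘ g = 0 -> g = 0) -> mono f.
Proof.
move=> f0 T g h E; apply/eqP; rewrite -subr_eq0; apply/eqP/f0.
by rewrite compBr E subrr.
Qed.

Lemma mono_eq0 (A B T : C) (f : Mor A B) (g : Mor T A) :
  mono f -> f ∘ g = 0 -> g = 0.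
Proof. by move=> monof E; apply: monof; rewrite E compm0. Qed.

Lemma epi_by0 (A B : C) (f : Mor A B) :
  (forall T (g : Mor B T), g ∘ f = 0 -> g = 0) -> epi f.
Proof.
move=> f0 T g h E; apply/eqP; rewrite -subr_eq0; apply/eqP/f0.
by rewrite compBl E subrr.
Qed.

Lemma epi_eq0 (A B T : C) (f : Mor A B) (g : Mor B T) :
  epi f -> g ∘ f = 0 -> g = 0.
Proof. by move=> epif E; apply: epif; rewrite E comp0m. Qed.

Lemma kernel_mono (A B K : C) (f : Mor A B) (k : Mor K A) :
  is_kernel f k -> mono k.
Proof.
case=> fk0 univ T g h E.
have [t [_ uniq_t]] := univ T (k ∘ g) ltac:(by rewrite mcompA fk0 comp0m).
by rewrite -(uniq_t g erefl) (uniq_t h (esym E)).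
Qed.

Lemma cokernel_epi (A B Q : C) (f : Mor A B) (q : Mor B Q) :
  is_cokernel f q -> epi q.
Proof.
case=> qf0 univ T g h E.
have [t [_ uniq_t]] := univ T (g ∘ q) ltac:(by rewrite -mcompA qf0 compm0).
by rewrite -(uniq_t g erefl) (uniq_t h (esym E)).
Qed.

Lemma kernel_of_cokernel (A B K Q : C) (g : Mor A B) (k : Mor K A) (c : Mor A Q) :
  is_kernel g k -> is_cokernel k c -> is_kernel c k.
Proof.
move=> [gk0 univk] [ck0 univc]; split=> // T t ct0.
have [g' [Eg _]] := univc _ g gk0.
by apply: univk; rewrite -Eg -mcompA ct0 compm0.
Qed.

Lemma cokernel_of_kernel (A B K Q : C) (g : Mor K A) (k : Mor Q A) (c : Mor A B) :
  is_cokernel g c -> is_kernel c k -> is_cokernel k c.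
Proof.
move=> [cg0 univc] [ck0 univk]; split=> // T t tk0.
have [g' [Eg _]] := univk _ g cg0.
by apply: univc; rewrite -Eg mcompA tk0 comp0m.
Qed.

Lemma pushout_morph_eq (W X Z P T : C) (f : Mor W X) (u : Mor W Z)
    (a : Mor X P) (b : Mor Z P) (t t' : Mor P T) :
  is_pushout f u a b -> t ∘ a = t' ∘ a -> t ∘ b = t' ∘ b -> t = t'.
Proof.
case=> sq univ Ea Eb.
have [s [_ uniq_s]] := univ T (t ∘ a) (t ∘ b) ltac:(by rewrite -!mcompA sq).
by rewrite -(uniq_s t (conj erefl erefl)) (uniq_s t' (conj (esym Ea) (esym Eb))).
Qed.

Lemma ext_eq_refl (Y K : C) (e : ext Y K) : ext_eq e e.
Proof. by exists (idm _); rewrite comp1m compm1. Qed.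

Lemma push_eq_factor (Y K' Z : C) (e : ext Y K') (u : Mor K' Z) (eta : ext Y Z) :
  ext_push_eq eta u e -> exists v : Mor (E_ob e) (E_ob eta), E_out e = E_out eta ∘ v.
Proof.
move=> [p [[a [_ Ea _]] [h [_ Eh]]]].
by exists (h ∘ a); rewrite mcompA Eh Ea.
Qed.

Lemma retraction_of_extensions (K M Q : C) (j : Mor M Q) :
  in_add K M -> (forall w : Mor M K, exists r : Mor Q K, r ∘ j = w) ->
  exists R : Mor Q M, R ∘ j = idm M.
Proof.
move=> [n [S [i [p [[_ sum_ip] [L [s1 [_ [r1 [_ [r1s1 _ _ _ _]]]]]]]]]]] ext_j.
have [rho Erho] := fin_all_exists (fun l : 'I_n => ext_j (p l ∘ s1)).
exists (r1 ∘ \sum_(l < n) i l ∘ rho l).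
rewrite -mcompA comp_suml.
under eq_bigr => l _ do rewrite -mcompA Erho mcompA.
by rewrite -comp_suml sum_ip comp1m r1s1.
Qed.

Lemma cokernel_section (K Q X : C) (j : Mor K Q) (q : Mor Q X) (R : Mor Q K) :
  is_cokernel j q -> R ∘ j = idm K -> exists s : Mor X Q, q ∘ s = idm X.
Proof.
move=> cok Rj; have [qj0 univ] := cok.
have [s [Es _]] := univ _ (idm Q - j ∘ R)
  ltac:(by rewrite compBl comp1m -mcompA Rj compm1 subrr).
exists s; apply: (cokernel_epi cok).
by rewrite -mcompA Es compBr compm1 mcompA qj0 comp0m subr0 comp1m.
Qed.

Hypothesis HC : abelian C.

Lemma mono_kernel (A B Q : C) (f : Mor A B) (c : Mor B Q) :
  mono f -> is_cokernel f c -> is_kernel c f.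
Proof.
move=> monof cok; case: HC => _ _ _ [mono_ker _].
by have [Z [g kerg]] := mono_ker _ _ f monof; exact: kernel_of_cokernel kerg cok.
Qed.

Lemma epi_cokernel (A B K : C) (f : Mor A B) (k : Mor K A) :
  epi f -> is_kernel f k -> is_cokernel k f.
Proof.
move=> epif ker; case: HC => _ _ _ [_ epi_coker].
by have [Z [g cokg]] := epi_coker _ _ f epif; exact: cokernel_of_kernel cokg ker.
Qed.

(* The pushout is the cokernel of [i1 f - i2 u : W -> X (+) Z]. *)
Lemma pushout_exists (W X Z : C) (f : Mor W X) (u : Mor W Z) :
  exists (P : C) (a : Mor X P) (b : Mor Z P),
    is_pushout f u a b /\ (mono f -> mono b).
Proof.
case: (HC) => _ biprod [_ coker] _.
have [S [i1 [i2 [p1 [p2 [e11 e22 e12 e21 eid]]]]]] := biprod X Z.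
set d := i1 ∘ f - i2 ∘ u.
have p1d : p1 ∘ d = f by rewrite compBr !mcompA e11 e12 comp1m comp0m subr0.
have p2d : p2 ∘ d = - u by rewrite compBr !mcompA e21 e22 comp1m comp0m sub0r.
have [P [q [qd0 univ]]] := coker _ _ d.
exists P, (q ∘ i1), (q ∘ i2); split; first split.
- by apply/eqP; rewrite -subr_eq0 -!mcompA -compBr qd0.
- move=> T x z E.
  have [t [Et uniq_t]] := univ T (x ∘ p1 + z ∘ p2)
    ltac:(by rewrite compDl -!mcompA p1d p2d compNr E subrr).
  exists t; split; first split.
  + by rewrite !mcompA Et compDl -!mcompA e11 e21 compm1 compm0 addr0.
  + by rewrite !mcompA Et compDl -!mcompA e12 e22 compm1 compm0 add0r.
  + move=> t' [Ex Ez]; apply: uniq_t.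
    by rewrite -Ex -Ez -!mcompA -!compDr eid compm1.
- move=> monof; apply: mono_by0 => T g qg0.
  have monod : mono d.
    by apply: mono_by0 => T' t dt0; apply: (mono_eq0 monof);
      rewrite -p1d -mcompA dt0 compm0.
  have [_ univd] := mono_kernel monod (conj qd0 univ).
  have [t [Et _]] := univd _ (i2 ∘ g) ltac:(by rewrite mcompA).
  have t0 : t = 0.
    by apply: (mono_eq0 monof); rewrite -p1d -mcompA Et mcompA e12 comp0m.
  by rewrite -[g]comp1m -e22 -mcompA -Et t0 !compm0.
Qed.

(* The pullback is the kernel of [f1 p1 - f2 p2 : X1 (+) X2 -> Y]. *)
Lemma pullback_exists (X1 X2 Y : C) (f1 : Mor X1 Y) (f2 : Mor X2 Y) :
  exists (Q : C) (q1 : Mor Q X1) (q2 : Mor Q X2),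
    [/\ f1 ∘ q1 = f2 ∘ q2,
        (forall T (x1 : Mor T X1) (x2 : Mor T X2), f1 ∘ x1 = f2 ∘ x2 ->
           exists t : Mor T Q, q1 ∘ t = x1 /\ q2 ∘ t = x2),
        (forall T (t : Mor T Q), q1 ∘ t = 0 -> q2 ∘ t = 0 -> t = 0)
      & (epi f2 -> epi q1)].
Proof.
case: (HC) => _ biprod [ker _] _.
have [S [i1 [i2 [p1 [p2 [e11 e22 e12 e21 eid]]]]]] := biprod X1 X2.
set d := f1 ∘ p1 - f2 ∘ p2.
have di1 : d ∘ i1 = f1 by rewrite compBl -!mcompA e11 e21 compm1 compm0 subr0.
have di2 : d ∘ i2 = - f2 by rewrite compBl -!mcompA e12 e22 compm1 compm0 sub0r.
have [Q [k [dk0 univ]]] := ker _ _ d.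
exists Q, (p1 ∘ k), (p2 ∘ k); split.
- by apply/eqP; rewrite -subr_eq0 !mcompA -compBl dk0.
- move=> T x1 x2 E.
  have [t [Et _]] := univ T (i1 ∘ x1 + i2 ∘ x2)
    ltac:(by rewrite compDr !mcompA di1 di2 compNl E subrr).
  exists t; rewrite -!mcompA Et !compDr !mcompA.
  by rewrite e11 e12 e21 e22 !comp1m !comp0m addr0 add0r.
- move=> T t q1t0 q2t0; apply: (mono_eq0 (kernel_mono (conj dk0 univ))).
  by rewrite -[k ∘ t]comp1m -eid compDl -!mcompA (mcompA p1) q1t0 (mcompA p2) q2t0
    !compm0 addr0.
- move=> epif2.
  have epid : epi d.
    apply: epi_by0 => T s sd0; apply: (epi_eq0 epif2).
    by apply/eqP; rewrite -oppr_eq0 -compNr -di2 mcompA sd0 comp0m.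
  have [_ univd] := epi_cokernel epid (conj dk0 univ).
  apply: epi_by0 => T t tq0.
  have [s [Es _]] := univd T (t ∘ p1) ltac:(by rewrite -mcompA).
  have s0 : s = 0.
    apply: (epi_eq0 epif2); apply/eqP.
    by rewrite -oppr_eq0 -compNr -di2 mcompA Es -mcompA e12 compm0.
  by rewrite -[t]compm1 -e11 mcompA -Es s0 !comp0m.
Qed.

Lemma pushout_ext_exists (Y K' Z : C) (e : ext Y K') (u : Mor K' Z) :
  short_exact e -> exists p : ext Y Z, is_pushout_ext e u p /\ short_exact p.
Proof.
move=> [ker coker].
have [P [a [b [po mono_b]]]] := pushout_exists (E_in e) u.
have [sq univ] := po.
have [o [[oa ob] _]] := univ Y (E_out e) 0 ltac:(by rewrite comp0m; case: ker).
have coker_bo : is_cokernel b o.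
  split=> // T t tb0.
  have [t' [Et' uniq_t']] := coker.2 T (t ∘ a)
    ltac:(by rewrite -mcompA sq mcompA tb0 comp0m).
  exists t'; split; last by move=> t'' E''; apply: uniq_t'; rewrite -E'' -mcompA oa.
  apply: (pushout_morph_eq po).
  - by rewrite -mcompA oa.
  - by rewrite -mcompA ob compm0 tb0.
exists (mkExt b o); split; first by exists a.
split=> //; exact: mono_kernel (mono_b (kernel_mono ker)) coker_bo.
Qed.

Lemma factor_push_eq (Y K1 K2 : C) (e1 : ext Y K1) (e2 : ext Y K2)
    (v : Mor (E_ob e1) (E_ob e2)) :
  short_exact e1 -> short_exact e2 -> E_out e1 = E_out e2 ∘ v ->
  exists u : Mor K1 K2, ext_push_eq e2 u e1.
Proof.
move=> se1 [[out_in2 ker2] _] Ev.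
have [u [Eu _]] := ker2 _ (v ∘ E_in e1)
  ltac:(by rewrite mcompA -Ev; case: se1 => -[]).
have [p [[a [po pa p0]] _]] := pushout_ext_exists u se1.
have [h [[ha hb] _]] := po.2 _ v (E_in e2) (esym Eu).
exists u, p; split; first by exists a.
exists h; split=> //; apply: (pushout_morph_eq po).
- by rewrite -mcompA ha pa.
- by rewrite -mcompA hb out_in2 p0.
Qed.

Lemma c_image_sub (K Y K1 K2 : C) (e1 : ext Y K1) (e2 : ext Y K2)
    (v : Mor (E_ob e1) (E_ob e2)) :
  short_exact e1 -> E_out e1 = E_out e2 ∘ v ->
  forall eta : ext Y K, c_image e2 K eta -> c_image e1 K eta.
Proof.
move=> se1 Ev eta [se_eta [w push_w]].
have [g Eg] := push_eq_factor push_w.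
have Egv : E_out e1 = E_out eta ∘ (g ∘ v) by rewrite mcompA -Eg.
have [u push_u] := factor_push_eq se1 se_eta Egv.
by split=> //; exists u.
Qed.

Lemma pullback_ext (Y K2 X1 : C) (e2 : ext Y K2) (al : Mor X1 Y) :
  short_exact e2 ->
  exists (Q : C) (pi1 : Mor Q X1) (pi2 : Mor Q (E_ob e2)) (j : Mor K2 Q),
    [/\ al ∘ pi1 = E_out e2 ∘ pi2, pi2 ∘ j = E_in e2 & is_cokernel j pi1].
Proof.
move=> [[out_in2 univ2] coker2].
have [Q [pi1 [pi2 [sq univ joint epi_pi1]]]] := pullback_exists al (E_out e2).
have [j [pi1j pi2j]] := univ _ 0 (E_in e2) ltac:(by rewrite compm0 out_in2).
exists Q, pi1, pi2, j; split=> //.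
apply: (epi_cokernel (epi_pi1 (cokernel_epi coker2))); split=> // T t pi1t0.
have [s [Es uniq_s]] := univ2 _ (pi2 ∘ t)
  ltac:(by rewrite mcompA -sq -mcompA pi1t0 compm0).
exists s; split.
- by apply/eqP; rewrite -subr_eq0; apply/eqP/joint;
    rewrite compBr mcompA ?pi1j ?pi2j ?comp0m ?pi1t0 ?Es subrr.
- by move=> s' Es'; apply: uniq_s; rewrite -Es' mcompA pi2j.
Qed.

Lemma c_image_sub_extension (K Y K1 K2 Q : C) (e1 : ext Y K1) (e2 : ext Y K2)
    (pi1 : Mor Q (E_ob e1)) (pi2 : Mor Q (E_ob e2)) (j : Mor K2 Q) :
  short_exact e2 ->
  (forall eta : ext Y K, c_image e2 K eta -> c_image e1 K eta) ->
  E_out e1 ∘ pi1 = E_out e2 ∘ pi2 -> pi1 ∘ j = 0 -> pi2 ∘ j = E_in e2 ->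
  forall w : Mor K2 K, exists r : Mor Q K, r ∘ j = w.
Proof.
move=> se2 sub sq pi1j pi2j w.
have [eta [push_eta se_eta]] := pushout_ext_exists (- w) se2.
have eta_in2 : c_image e2 K eta.
  by split=> //; exists (- w), eta; split; last exact: ext_eq_refl.
have [_ [u push_u]] := sub eta eta_in2.
have [g Eg] := push_eq_factor push_u.
have [a [[po_sq _] a_out _]] := push_eta.
have [ker_eta _] := se_eta.
have [r [Er _]] := ker_eta.2 _ (g ∘ pi1 - a ∘ pi2)
  ltac:(by rewrite compBr !mcompA -Eg a_out sq subrr).
exists r; apply: (kernel_mono ker_eta).
by rewrite mcompA Er compBl -!mcompA pi1j pi2j compm0 sub0r po_sq compNr opprK.
Qed.

Lemma add_c_image_sub_factor (K Y K1 K2 : C) (e1 : ext Y K1) (e2 : ext Y K2) :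
  short_exact e2 -> in_add K K2 ->
  (forall eta : ext Y K, c_image e2 K eta -> c_image e1 K eta) ->
  exists v : Mor (E_ob e1) (E_ob e2), E_out e1 = E_out e2 ∘ v.
Proof.
move=> se2 addK2 sub.
have [Q [pi1 [pi2 [j [sq pi2j coker]]]]] := pullback_ext (E_out e1) se2.
have [R Rj] := retraction_of_extensions addK2
  (c_image_sub_extension se2 sub sq coker.1 pi2j).
have [s pi1s] := cokernel_section coker Rj.
by exists (pi2 ∘ s); rewrite mcompA -sq -mcompA pi1s compm1.
Qed.

End Extensions.

Theorem lemma2p1 (C : PreAddCat) (HC : abelian C) (Kk Y K1 K2 : C)
    (xi1 : ext Y K1) (xi2 : ext Y K2)
    (H1 : short_exact xi1) (H2 : short_exact xi2) :
  let st1 := exists v : Mor (E_ob xi1) (E_ob xi2), E_out xi1 = mcomp (E_out xi2) v in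
  let st2 := exists u : Mor K1 K2, ext_push_eq xi2 u xi1 in
  let st3 := forall eta : ext Y Kk, c_image xi2 Kk eta -> c_image xi1 Kk eta in
  [/\ (st1 <-> st2),
      (st2 -> st3),
      (right_equiv (E_out xi1) (E_out xi2) ->
         forall eta : ext Y Kk, c_image xi1 Kk eta <-> c_image xi2 Kk eta),
      (in_add Kk K2 -> st3 -> st2)
    & (in_add Kk K1 -> in_add Kk K2 ->
         (right_equiv (E_out xi1) (E_out xi2) <->
          forall eta : ext Y Kk, c_image xi1 Kk eta <-> c_image xi2 Kk eta))].
Proof.
move=> st1 st2 st3.
have st12 : st1 -> st2 by rewrite /st1 /st2 => -[v] Ev; exact: (factor_push_eq HC H1 H2 Ev).
have st21 : st2 -> st1 by rewrite /st1 /st2 => -[u] push_u; exact: (push_eq_factor push_u).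
have st13 : st1 -> st3 by rewrite /st1 /st3 => -[v] Ev; exact: (c_image_sub HC H1 Ev).
have add_st31 : in_add Kk K2 -> st3 -> st1.
  by rewrite /st1 /st3 => addK2 sub; exact: (add_c_image_sub_factor HC H2 addK2 sub).
have req_c_image : right_equiv (E_out xi1) (E_out xi2) ->
    forall eta : ext Y Kk, c_image xi1 Kk eta <-> c_image xi2 Kk eta.
  case=> [[v Ev] [v' Ev']] eta.
  by split; [exact: (c_image_sub HC H2 Ev') | exact: (c_image_sub HC H1 Ev)].
split=> [||||addK1 addK2].
- by split.
- by move/st21/st13.
- exact: req_c_image.
- by move=> addK2 /(add_st31 addK2)/st12.
- split=> // same_image; split.
  + by apply: (add_st31 addK2) => eta /same_image.
  + by apply: (add_c_image_sub_factor HC H1 addK1) => eta /same_image.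
Qed.
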